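(* Let $\sigma:\mathbb{R}\to\mathbb{R}$ be an increasing odd homeomorphism such that either $\sigma(x)=x$ for all $x$ in a neighborhood of $0$, or $\sigma(x)=x$ for all $x\in\mathbb{Z}$. Let $h(x,y)=(x+y,y)$, $v(x,y)=(x,x+y)$, so that $\Gamma(\mathrm{Id})=\langle h,v\rangle=\mathrm{SL}(2,\mathbb{Z})$. Then: (1) there is a surjective group morphism $\pi:\Gamma(\sigma)\to\Gamma(\mathrm{Id})$ with $\pi(w(h_\sigma,v_\sigma))=w(h,v)$ for every word $w$ in the free group on two letters; (2) the kernel of $\pi$ is the normal subgroup of $\Gamma(\sigma)$ generated by $V_\sigma^2U_\sigma^3$ and $V_\sigma^4$, where $U_\sigma=v_\sigma^{-1}h_\sigma$ and $V_\sigma=h_\sigma^{-1}v_\sigma h_\sigma^{-1}$.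
   Context: $h_\sigma(x,y)=(x+\sigma^{-1}(y),y)$, $v_\sigma(x,y)=(x,\sigma(x)+y)$, and $\Gamma(\sigma)$ is the group generated by $h_\sigma,v_\sigma$ under composition. For a word $w$ in the free group $\mathbb F(a,b)$ and elements $x,y$ of a group, $w(x,y)$ denotes the image of $w$ under the morphism $a\mapsto x$, $b\mapsto y$. *)

From Stdlib Require Import Reals List.
Import ListNotations.
Open Scope R_scope.

(* Letters of the free group F(a,b): a generator together with a flag
   [true] meaning "inverse". Words are lists of letters; every element of
   the free group is represented by such a word. *)
Inductive gen := Ga | Gb.
Definition letter := (gen * bool)%type.
Definition word := list letter.

Definition winv (w : word) : word :=
  rev (map (fun l => (fst l, negb (snd l))) w).

Definition pt := (R * R)%type.

(* h_sigma, v_sigma and their inverses; [si] is sigma^{-1}. *)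
Definition h_s (s si : R -> R) (p : pt) : pt := (fst p + si (snd p), snd p).
Definition h_s_inv (s si : R -> R) (p : pt) : pt := (fst p - si (snd p), snd p).
Definition v_s (s si : R -> R) (p : pt) : pt := (fst p, s (fst p) + snd p).
Definition v_s_inv (s si : R -> R) (p : pt) : pt := (fst p, snd p - s (fst p)).

Definition letter_map (s si : R -> R) (l : letter) : pt -> pt :=
  match l with
  | (Ga, false) => h_s s si
  | (Ga, true) => h_s_inv s si
  | (Gb, false) => v_s s si
  | (Gb, true) => v_s_inv s si
  end.

(* w(h_sigma, v_sigma): the group law of Gamma(sigma) is composition,
   so [l1; ...; ln] evaluates to l1 o ... o ln. *)
Fixpoint eval_word (s si : R -> R) (w : word) : pt -> pt :=
  match w with
  | [] => fun p => p
  | l :: w' => fun p => letter_map s si l (eval_word s si w' p)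
  end.

Definition Gamma (s si : R -> R) (f : pt -> pt) : Prop :=
  exists w : word, f = eval_word s si w.

(* U_sigma = v^-1 h,  V_sigma = h^-1 v h^-1 (as words in a = h, b = v). *)
Definition U_w : word := [(Gb, true); (Ga, false)].
Definition V_w : word := [(Ga, true); (Gb, false); (Ga, true)].
Definition rel1 : word := V_w ++ V_w ++ U_w ++ U_w ++ U_w.
Definition rel2 : word := V_w ++ V_w ++ V_w ++ V_w.

(* Words representing elements of the normal closure of {rel1, rel2}:
   finite products of conjugates u r^{+-1} u^{-1}. *)
Inductive NCword : word -> Prop :=
  | NC_nil : NCword []
  | NC_cons (u r w : word) :
      (r = rel1 \/ r = winv rel1 \/ r = rel2 \/ r = winv rel2) ->
      NCword w -> NCword (u ++ r ++ winv u ++ w).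

Definition NormalClosure (s si : R -> R) (f : pt -> pt) : Prop :=
  exists w : word, NCword w /\ f = eval_word s si w.

Definition Rid (x : R) : R := x.

(* It is well defined because sigma is
   the identity near 0 (resp. on Z): w(h_sigma, v_sigma) then agrees with the
   linear map w(h, v) at two independent vectors, small enough (resp. integral),
   and these determine w(h, v).  For the kernel, the relations V^4 = 1 and
   U^3 = V^2, with V^2 central, bring every word modulo the normal closure to a
   normal form V^(2e) times an alternating product of V and U, U^2.  A ping-pong
   on the quadrants of R^2 shows that only the empty normal form acts trivially:
   V exchanges the mixed-sign and same-sign quadrants, while U and U^2 map the
   same-sign quadrants into the mixed-sign ones and increase the l1-norm. *)

From Stdlib Require Import Reals List Lra ClassicalEpsilon FunctionalExtensionality.
Import ListNotations.
Open Scope R_scope.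

Section FreeGroup.

Variables s si : R -> R.

Notation eval := (eval_word s si).

Lemma eval_word_app w1 w2 p : eval (w1 ++ w2) p = eval w1 (eval w2 p).
Proof. induction w1 as [|l w1 IH]; simpl; [reflexivity | now rewrite IH]. Qed.

Lemma eval_word_comp w1 w2 :
  (fun p => eval w1 (eval w2 p)) = eval (w1 ++ w2).
Proof. apply functional_extensionality; intro p; now rewrite eval_word_app. Qed.

Definition letter_inv (l : letter) : letter := (fst l, negb (snd l)).

Definition gen_eqb (g1 g2 : gen) : bool :=
  match g1, g2 with Ga, Ga | Gb, Gb => true | _, _ => false end.

Definition cancels (l1 l2 : letter) : bool :=
  gen_eqb (fst l1) (fst l2) && xorb (snd l1) (snd l2).

Lemma letter_map_cancel l1 l2 p :
  cancels l1 l2 = true -> letter_map s si l1 (letter_map s si l2 p) = p.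
Proof.
  destruct p as [x y], l1 as [[] []], l2 as [[] []]; try discriminate;
    intros _; unfold letter_map, h_s, h_s_inv, v_s, v_s_inv; simpl; f_equal; ring.
Qed.

Lemma cancels_letter_inv l :
  cancels (letter_inv l) l = true /\ cancels l (letter_inv l) = true.
Proof. now destruct l as [[] []]. Qed.

Lemma winv_cons l w : winv (l :: w) = winv w ++ [letter_inv l].
Proof. reflexivity. Qed.

Lemma winv_app w1 w2 : winv (w1 ++ w2) = winv w2 ++ winv w1.
Proof. unfold winv; now rewrite map_app, rev_app_distr. Qed.

Lemma eval_winvK w p : eval (winv w) (eval w p) = p.
Proof.
  induction w as [|l w IH]; [reflexivity|].
  rewrite winv_cons, eval_word_app; cbn [eval_word].
  rewrite letter_map_cancel; [exact IH | apply cancels_letter_inv].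
Qed.

Lemma eval_winvKV w p : eval w (eval (winv w) p) = p.
Proof.
  revert p; induction w as [|l w IH]; intro p; [reflexivity|].
  rewrite winv_cons, eval_word_app; cbn [eval_word].
  rewrite IH. apply letter_map_cancel, cancels_letter_inv.
Qed.

Definition reduce_step (l : letter) (w : word) : word :=
  match w with
  | l' :: w' => if cancels l l' then w' else l :: w
  | [] => [l]
  end.

Definition free_reduce (w : word) : word := fold_right reduce_step [] w.

Lemma eval_free_reduce w p : eval (free_reduce w) p = eval w p.
Proof.
  induction w as [|l w IH]; [reflexivity|]; simpl; rewrite <- IH.
  destruct (free_reduce w) as [|l' w']; [reflexivity|]; simpl.
  destruct (cancels l l') eqn:E; [now rewrite letter_map_cancel | reflexivity].
Qed.

Lemma NCword_app w1 w2 : NCword w1 -> NCword w2 -> NCword (w1 ++ w2).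
Proof.
  induction 1 as [|u r w Hr _ IH]; intro H2; [exact H2|].
  rewrite <- !app_assoc; constructor; auto.
Qed.

Lemma NCword_commute k v : NCword k ->
  exists k', NCword k' /\ forall p, eval (v ++ k) p = eval (k' ++ v) p.
Proof.
  induction 1 as [|u r w Hr _ [w' [Hw' E]]].
  - exists []; split; [constructor | intro p; now rewrite app_nil_r].
  - exists ((v ++ u) ++ r ++ winv (v ++ u) ++ w'); split; [now constructor|].
    intro p; rewrite winv_app, !eval_word_app, <- (eval_word_app w' v), <- E.
    now rewrite eval_word_app, eval_winvK.
Qed.

Definition congr_NC (w w' : word) : Prop :=
  exists k, NCword k /\ forall p, eval w p = eval (k ++ w') p.

Lemma congr_of_eval w w' : (forall p, eval w p = eval w' p) -> congr_NC w w'.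
Proof. intro E; exists []; split; [constructor | exact E]. Qed.

Lemma congr_refl w : congr_NC w w.
Proof. now apply congr_of_eval. Qed.

Lemma congr_of_free_reduce k w w' :
  NCword k -> free_reduce w = free_reduce (k ++ w') -> congr_NC w w'.
Proof.
  intros Hk E; exists k; split; [exact Hk|].
  intro p; now rewrite <- eval_free_reduce, E, eval_free_reduce.
Qed.

Lemma congr_trans w1 w2 w3 : congr_NC w1 w2 -> congr_NC w2 w3 -> congr_NC w1 w3.
Proof.
  intros [k1 [H1 E1]] [k2 [H2 E2]].
  exists (k1 ++ k2); split; [now apply NCword_app|].
  intro p; rewrite E1, !eval_word_app, E2, eval_word_app; reflexivity.
Qed.

Lemma congr_appr w w' x : congr_NC w w' -> congr_NC (w ++ x) (w' ++ x).
Proof.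
  intros [k [Hk E]]; exists k; split; [exact Hk|].
  intro p; rewrite !eval_word_app, E, !eval_word_app; reflexivity.
Qed.

Lemma congr_appl x w w' : congr_NC w w' -> congr_NC (x ++ w) (x ++ w').
Proof.
  intros [k [Hk E]]; destruct (NCword_commute k x Hk) as [k' [Hk' E']].
  exists k'; split; [exact Hk'|].
  intro p; rewrite eval_word_app, E, <- eval_word_app, app_assoc, eval_word_app, E'.
  now rewrite <- eval_word_app, <- app_assoc.
Qed.

End FreeGroup.

Ltac solve_NCword := repeat (apply NC_cons; [tauto|]); apply NC_nil.

Ltac by_free_reduce k :=
  apply (congr_of_free_reduce _ _ k); [solve_NCword | vm_compute; reflexivity].

Definition VV : word := V_w ++ V_w.

Section Relations.

Variables s si : R -> R.

Lemma VV_VV_cancel w : congr_NC s si (VV ++ VV ++ w) w.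
Proof. by_free_reduce ([] ++ rel2 ++ winv [] ++ []). Qed.

Lemma U_VV_commute : congr_NC s si (U_w ++ VV) (VV ++ U_w).
Proof. by_free_reduce (U_w ++ rel1 ++ winv U_w ++ ([] ++ winv rel1 ++ winv [] ++ [])). Qed.

Lemma UUU_VV : congr_NC s si (U_w ++ U_w ++ U_w) VV.
Proof. by_free_reduce (winv VV ++ rel1 ++ winv (winv VV) ++ ([] ++ winv rel2 ++ winv [] ++ [])). Qed.

Lemma winv_V_congr : congr_NC s si (winv V_w) (V_w ++ V_w ++ V_w).
Proof. by_free_reduce ([] ++ winv rel2 ++ winv [] ++ []). Qed.

Lemma winv_U_congr : congr_NC s si (winv U_w) (U_w ++ U_w ++ U_w ++ U_w ++ U_w).
Proof.
  by_free_reduce ([] ++ winv rel1 ++ winv [] ++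
                  (VV ++ winv rel1 ++ winv VV ++ ([] ++ rel2 ++ winv [] ++ []))).
Qed.

End Relations.

(* Normal forms for SL(2,Z) = <U, V | U^3 = V^2, V^4 = 1>: an optional central
   factor V^2 followed by an alternating product of V and U^{+-1}
   (with U^2 standing for U^-1). *)
Inductive token := TV | TU | TU2.

Definition token_word (t : token) : word :=
  match t with TV => V_w | TU => U_w | TU2 => U_w ++ U_w end.

Definition tokens_word (l : list token) : word := concat (map token_word l).

Definition nf (e : bool) (l : list token) : word :=
  (if e then VV else []) ++ tokens_word l.

Definition is_U (t : token) : bool := match t with TV => false | _ => true end.

Fixpoint alternating (l : list token) : bool :=
  match l with
  | t1 :: (t2 :: _) as l' => xorb (is_U t1) (is_U t2) && alternating l'
  | _ => true
  end.

Lemma alternating_tail t l : alternating (t :: l) = true -> alternating l = true.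
Proof. destruct l; simpl; [auto | now intros [_ ?]%andb_prop]. Qed.

Section NormalForm.

Variables s si : R -> R.

Definition has_nf (w : word) : Prop :=
  exists e l, alternating l = true /\ congr_NC s si w (nf e l).

Lemma has_nf_congr w w' : congr_NC s si w w' -> has_nf w' -> has_nf w.
Proof.
  intros E [e [l [Hl E']]]; exists e, l; split; [exact Hl | exact (congr_trans _ _ _ _ _ E E')].
Qed.

Lemma has_nf_nf e l : alternating l = true -> has_nf (nf e l).
Proof. intro Hl; exists e, l; split; [exact Hl | apply congr_refl]. Qed.

Lemma has_nf_VV w : has_nf w -> has_nf (VV ++ w).
Proof.
  intros [e [l [Hl E]]]; apply (has_nf_congr _ (VV ++ nf e l)); [now apply congr_appl|].
  destruct e.
  - apply (has_nf_congr _ (nf false l)); [apply VV_VV_cancel | now apply has_nf_nf].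
  - now apply (has_nf_nf true).
Qed.

Lemma has_nf_U_tokens l : alternating l = true -> has_nf (U_w ++ tokens_word l).
Proof.
  intro Hl; destruct l as [|[] l].
  - now apply (has_nf_nf false [TU]).
  - now apply (has_nf_nf false (TU :: TV :: l)).
  - now apply (has_nf_nf false (TU2 :: l)).
  - apply (has_nf_congr _ ((U_w ++ U_w ++ U_w) ++ tokens_word l)).
    + rewrite <- !app_assoc; apply congr_refl.
    + apply (has_nf_congr _ (nf true l)); [apply congr_appr, UUU_VV|].
      apply has_nf_nf, (alternating_tail _ _ Hl).
Qed.

Lemma has_nf_V_tokens l : alternating l = true -> has_nf (V_w ++ tokens_word l).
Proof.
  intro Hl; destruct l as [|[] l].
  - now apply (has_nf_nf false [TV]).
  - apply (has_nf_congr _ (nf true l)); [apply congr_refl|].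
    apply has_nf_nf, (alternating_tail _ _ Hl).
  - now apply (has_nf_nf false (TV :: TU :: l)).
  - now apply (has_nf_nf false (TV :: TU2 :: l)).
Qed.

Lemma has_nf_U w : has_nf w -> has_nf (U_w ++ w).
Proof.
  intros [e [l [Hl E]]]; apply (has_nf_congr _ (U_w ++ nf e l)); [now apply congr_appl|].
  destruct e; [|now apply has_nf_U_tokens].
  apply (has_nf_congr _ (VV ++ U_w ++ tokens_word l)).
  - unfold nf; rewrite !app_assoc; apply congr_appr, U_VV_commute.
  - now apply has_nf_VV, has_nf_U_tokens.
Qed.

Lemma has_nf_V w : has_nf w -> has_nf (V_w ++ w).
Proof.
  intros [e [l [Hl E]]]; apply (has_nf_congr _ (V_w ++ nf e l)); [now apply congr_appl|].
  destruct e; [|now apply has_nf_V_tokens].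
  now apply has_nf_VV, has_nf_V_tokens.
Qed.

Lemma has_nf_Uinv w : has_nf w -> has_nf (winv U_w ++ w).
Proof.
  intro H; apply (has_nf_congr _ ((U_w ++ U_w ++ U_w ++ U_w ++ U_w) ++ w)).
  - apply congr_appr, winv_U_congr.
  - rewrite <- !app_assoc; now do 5 apply has_nf_U.
Qed.

Lemma has_nf_Vinv w : has_nf w -> has_nf (winv V_w ++ w).
Proof.
  intro H; apply (has_nf_congr _ ((V_w ++ V_w ++ V_w) ++ w)).
  - apply congr_appr, winv_V_congr.
  - rewrite <- !app_assoc; now do 3 apply has_nf_V.
Qed.

(* h^-1 = U V and v^-1 = U^2 V. *)
Lemma has_nf_cons l w : has_nf w -> has_nf (l :: w).
Proof.
  intro H; change (l :: w) with ([l] ++ w); destruct l as [[] []].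
  - apply (has_nf_congr _ ((U_w ++ V_w) ++ w)); [apply congr_appr; by_free_reduce (@nil letter)|].
    rewrite <- app_assoc; now apply has_nf_U, has_nf_V.
  - apply (has_nf_congr _ ((winv V_w ++ winv U_w) ++ w));
      [apply congr_appr; by_free_reduce (@nil letter)|].
    rewrite <- app_assoc; now apply has_nf_Vinv, has_nf_Uinv.
  - apply (has_nf_congr _ ((U_w ++ U_w ++ V_w) ++ w));
      [apply congr_appr; by_free_reduce (@nil letter)|].
    rewrite <- !app_assoc; now apply has_nf_U, has_nf_U, has_nf_V.
  - apply (has_nf_congr _ ((winv V_w ++ winv U_w ++ winv U_w) ++ w));
      [apply congr_appr; by_free_reduce (@nil letter)|].
    rewrite <- !app_assoc; now apply has_nf_Vinv, has_nf_Uinv, has_nf_Uinv.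
Qed.

Lemma word_has_nf w : has_nf w.
Proof.
  induction w as [|l w IH]; [now apply (has_nf_nf false []) | now apply has_nf_cons].
Qed.

End NormalForm.

Definition eval_lin : word -> pt -> pt := eval_word Rid Rid.

Definition token_map (t : token) (p : pt) : pt :=
  match t with
  | TV => (- snd p, fst p)
  | TU => (fst p + snd p, - fst p)
  | TU2 => (snd p, - fst p - snd p)
  end.

Fixpoint tokens_map (l : list token) (p : pt) : pt :=
  match l with [] => p | t :: l' => token_map t (tokens_map l' p) end.

Lemma eval_lin_token t p : eval_lin (token_word t) p = token_map t p.
Proof.
  destruct p as [x y], t; unfold eval_lin; simpl;
    unfold h_s, h_s_inv, v_s, v_s_inv, Rid; simpl; f_equal; ring.
Qed.

Lemma eval_lin_VV p : eval_lin VV p = (- fst p, - snd p).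
Proof.
  destruct p as [x y]; unfold eval_lin; simpl;
    unfold h_s, h_s_inv, v_s, v_s_inv, Rid; simpl; f_equal; ring.
Qed.

Lemma eval_lin_tokens l p : eval_lin (tokens_word l) p = tokens_map l p.
Proof.
  induction l as [|t l IH]; [reflexivity|].
  unfold eval_lin, tokens_word in *; simpl; rewrite eval_word_app, IH.
  apply eval_lin_token.
Qed.

Lemma eval_lin_nf e l p :
  eval_lin (nf e l) p =
  if e then (- fst (tokens_map l p), - snd (tokens_map l p)) else tokens_map l p.
Proof.
  unfold nf, eval_lin; rewrite eval_word_app; fold eval_lin; rewrite eval_lin_tokens.
  destruct e; [apply eval_lin_VV | reflexivity].
Qed.

Definition l1norm (p : pt) : R := Rabs (fst p) + Rabs (snd p).

Definition mixed_signs (p : pt) : Prop := fst p * snd p < 0.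
Definition same_signs (p : pt) : Prop := 0 < fst p * snd p.

Lemma same_signs_cases x y : 0 < x * y -> (0 < x /\ 0 < y) \/ (x < 0 /\ y < 0).
Proof. intro H; destruct (Rlt_or_le 0 x), (Rlt_or_le 0 y); [left; lra | right; nra ..]. Qed.

Lemma l1norm_nonneg p : 0 <= l1norm p.
Proof. unfold l1norm; pose proof (Rabs_pos (fst p)); pose proof (Rabs_pos (snd p)); lra. Qed.

Definition token_source (t : token) : pt -> Prop :=
  match t with TV => mixed_signs | _ => same_signs end.
Definition token_target (t : token) : pt -> Prop :=
  match t with TV => same_signs | _ => mixed_signs end.

Lemma token_pingpong t p : token_source t p ->
  token_target t (token_map t p) /\ l1norm p <= l1norm (token_map t p) /\
  (is_U t = true -> l1norm p < l1norm (token_map t p)).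
Proof.
  destruct p as [x y]; unfold token_source, token_target, mixed_signs, same_signs, l1norm.
  destruct t; simpl; intro H.
  - repeat split; [nra | rewrite Rabs_Ropp; lra | discriminate].
  - destruct (same_signs_cases x y H); repeat split; try intros _;
      first [split_Rabs; lra | nra].
  - destruct (same_signs_cases x y H); repeat split; try intros _;
      first [split_Rabs; lra | nra].
Qed.

Fixpoint last_token (t : token) (l : list token) : token :=
  match l with [] => t | t' :: l' => last_token t' l' end.

Lemma tokens_pingpong l : forall t p,
  alternating (t :: l) = true -> token_source (last_token t l) p ->
  token_target t (tokens_map (t :: l) p) /\ l1norm p <= l1norm (tokens_map (t :: l) p) /\
  (existsb is_U (t :: l) = true -> l1norm p < l1norm (tokens_map (t :: l) p)).
Proof.
  induction l as [|t' l IH]; intros t p Halt Hsrc.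
  - destruct (token_pingpong t p Hsrc) as [Ht [Hle Hlt]].
    simpl; rewrite Bool.orb_false_r; auto.
  - apply andb_prop in Halt as [Hxor Halt].
    destruct (IH t' p Halt Hsrc) as [Ht' [Hle' Hlt']].
    set (q := tokens_map (t' :: l) p) in *.
    assert (Hq : token_source t q) by (destruct t, t'; try discriminate Hxor; exact Ht').
    destruct (token_pingpong t q Hq) as [Ht [Hle Hlt]].
    change (tokens_map (t :: t' :: l) p) with (token_map t q).
    repeat split; [exact Ht | lra |]; intros _.
    destruct (is_U t) eqn:HU; [specialize (Hlt eq_refl); lra|].
    assert (HU' : is_U t' = true) by (destruct (is_U t'); [reflexivity | discriminate Hxor]).
    assert (l1norm p < l1norm q) by (apply Hlt'; simpl; now rewrite HU'). lra.
Qed.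

Lemma l1norm_opp p : l1norm (- fst p, - snd p) = l1norm p.
Proof. unfold l1norm; simpl; now rewrite !Rabs_Ropp. Qed.

Lemma nf_faithful e l :
  alternating l = true -> (forall p, eval_lin (nf e l) p = p) -> e = false /\ l = [].
Proof.
  intros Halt Hid; destruct l as [|t l].
  - destruct e; [|auto]; specialize (Hid (1, 0)).
    rewrite eval_lin_nf in Hid; simpl in Hid; injection Hid; lra.
  - exfalso.
    set (p := if is_U (last_token t l) then ((1, 1) : pt) else (1, -1)).
    assert (Hsrc : token_source (last_token t l) p) by
      (unfold p; destruct (last_token t l); unfold token_source, mixed_signs, same_signs; simpl; lra).
    destruct (tokens_pingpong l t p Halt Hsrc) as [_ [_ Hlt]].
    assert (Hnorm : l1norm (tokens_map (t :: l) p) = l1norm p).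
    { specialize (Hid p); rewrite eval_lin_nf in Hid.
      destruct e; rewrite <- Hid at 2; [now rewrite l1norm_opp | reflexivity]. }
    destruct (existsb is_U (t :: l)) eqn:HU; [specialize (Hlt eq_refl); lra|].
    destruct t; try discriminate HU.
    destruct l as [|t' l]; [|destruct t'; discriminate].
    specialize (Hid p); rewrite eval_lin_nf in Hid; unfold p in Hid; simpl in Hid.
    destruct e; injection Hid; lra.
Qed.

Lemma eval_lin_rel1 p : eval_lin rel1 p = p.
Proof.
  unfold rel1, eval_lin; rewrite !eval_word_app; fold eval_lin.
  change V_w with (token_word TV); change U_w with (token_word TU).
  rewrite !eval_lin_token; destruct p as [x y]; simpl; f_equal; ring.
Qed.

Lemma eval_lin_rel2 p : eval_lin rel2 p = p.
Proof.
  unfold rel2, eval_lin; rewrite !eval_word_app; fold eval_lin.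
  change V_w with (token_word TV).
  rewrite !eval_lin_token; destruct p as [x y]; simpl; f_equal; ring.
Qed.

Lemma eval_lin_winv_id w : (forall p, eval_lin w p = p) -> forall p, eval_lin (winv w) p = p.
Proof. intros Hw p; rewrite <- (Hw p) at 1; apply eval_winvK. Qed.

Lemma eval_lin_relator r : (r = rel1 \/ r = winv rel1 \/ r = rel2 \/ r = winv rel2) ->
  forall p, eval_lin r p = p.
Proof.
  intros [-> | [-> | [-> | ->]]];
    auto using eval_lin_rel1, eval_lin_rel2, eval_lin_winv_id.
Qed.

Lemma eval_lin_NCword k : NCword k -> forall p, eval_lin k p = p.
Proof.
  induction 1 as [|u r w Hr _ IH]; intro p; [reflexivity|].
  unfold eval_lin in *; rewrite !eval_word_app, IH; fold eval_lin.
  rewrite (eval_lin_relator r Hr); apply eval_winvKV.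
Qed.

Lemma eval_lin_linear w :
  exists a b c d, forall x y, eval_lin w (x, y) = (a * x + b * y, c * x + d * y).
Proof.
  induction w as [|l w [a [b [c [d IH]]]]].
  - exists 1, 0, 0, 1; intros x y; unfold eval_lin; simpl; f_equal; ring.
  - unfold eval_lin in *; destruct l as [[] []]; cbn [eval_word].
    + exists (a - c), (b - d), c, d; intros x y; rewrite IH; simpl.
      unfold h_s_inv, Rid; simpl; f_equal; ring.
    + exists (a + c), (b + d), c, d; intros x y; rewrite IH; simpl.
      unfold h_s, Rid; simpl; f_equal; ring.
    + exists a, b, (c - a), (d - b); intros x y; rewrite IH; simpl.
      unfold v_s_inv, Rid; simpl; f_equal; ring.
    + exists a, b, (c + a), (d + b); intros x y; rewrite IH; simpl.
      unfold v_s, Rid; simpl; f_equal; ring.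
Qed.

Lemma eval_lin_eq_on_axes w1 w2 c : c <> 0 ->
  eval_lin w1 (c, 0) = eval_lin w2 (c, 0) -> eval_lin w1 (0, c) = eval_lin w2 (0, c) ->
  forall p, eval_lin w1 p = eval_lin w2 p.
Proof.
  intros Hc E1 E2 [x y].
  destruct (eval_lin_linear w1) as [a [b [c1 [d L1]]]].
  destruct (eval_lin_linear w2) as [a' [b' [c1' [d' L2]]]].
  rewrite L1, L2 in *; injection E1; injection E2; intros.
  assert (a = a') by (apply (Rmult_eq_reg_r c); lra).
  assert (b = b') by (apply (Rmult_eq_reg_r c); lra).
  assert (c1 = c1') by (apply (Rmult_eq_reg_r c); lra).
  assert (d = d') by (apply (Rmult_eq_reg_r c); lra).
  now subst.
Qed.

Lemma letter_lin_l1norm l p : l1norm (letter_map Rid Rid l p) <= 2 * l1norm p.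
Proof.
  destruct p as [x y], l as [[] []];
    unfold letter_map, h_s, h_s_inv, v_s, v_s_inv, Rid, l1norm; simpl; split_Rabs; lra.
Qed.

Section Sigma.

Variables s si : R -> R.
Hypothesis si_s : forall x, si (s x) = x.

Lemma eval_word_on_Z2 (s_Z : forall z : Z, s (IZR z) = IZR z) w m n :
  exists m' n', eval_word s si w (IZR m, IZR n) = (IZR m', IZR n') /\
                eval_lin w (IZR m, IZR n) = (IZR m', IZR n').
Proof.
  assert (si_Z : forall z, si (IZR z) = IZR z) by (intro z; rewrite <- (s_Z z) at 1; apply si_s).
  induction w as [|l w [m' [n' [E El]]]]; [now exists m, n|].
  unfold eval_lin in *; cbn [eval_word]; rewrite E, El.
  destruct l as [[] []]; unfold letter_map, h_s, h_s_inv, v_s, v_s_inv, Rid; simpl;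
    rewrite ?s_Z, ?si_Z.
  - exists (m' - n')%Z, n'; now rewrite minus_IZR.
  - exists (m' + n')%Z, n'; now rewrite plus_IZR.
  - exists m', (n' - m')%Z; now rewrite minus_IZR.
  - exists m', (m' + n')%Z; now rewrite plus_IZR.
Qed.

Section NearZero.

Variable e : R.
Hypothesis e_pos : 0 < e.
Hypothesis s_near0 : forall x, Rabs x < e -> s x = x.

Lemma letter_map_near0 l p : l1norm p < e -> letter_map s si l p = letter_map Rid Rid l p.
Proof.
  assert (si_near0 : forall y, Rabs y < e -> si y = y)
    by (intros y Hy; rewrite <- (s_near0 y Hy) at 1; apply si_s).
  destruct p as [x y]; unfold l1norm; simpl; intro Hp.
  assert (Hx : Rabs x < e) by (pose proof (Rabs_pos y); lra).
  assert (Hy : Rabs y < e) by (pose proof (Rabs_pos x); lra).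
  destruct l as [[] []]; unfold letter_map, h_s, h_s_inv, v_s, v_s_inv, Rid; simpl;
    now rewrite ?(s_near0 x Hx), ?(si_near0 y Hy).
Qed.

Lemma eval_word_near0_bound w p : l1norm p * 2 ^ length w < e ->
  eval_word s si w p = eval_lin w p /\ l1norm (eval_lin w p) <= l1norm p * 2 ^ length w.
Proof.
  induction w as [|l w IH]; intro Hp.
  - change (eval_lin [] p) with p; simpl in *; split; [reflexivity | lra].
  - cbn [length pow] in Hp |- *.
    assert (Hn : 0 <= l1norm p * 2 ^ length w)
      by (apply Rmult_le_pos; [apply l1norm_nonneg | apply pow_le; lra]).
    destruct IH as [E Hb]; [lra|].
    unfold eval_lin in *; cbn [eval_word]; rewrite E.
    pose proof (letter_lin_l1norm l (eval_word Rid Rid w p)).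
    split; [apply letter_map_near0; lra | lra].
Qed.

Lemma eval_word_near0 w :
  exists d, 0 < d /\ forall p, l1norm p < d -> eval_word s si w p = eval_lin w p.
Proof.
  assert (H2 : 0 < 2 ^ length w) by (apply pow_lt; lra).
  exists (e / 2 ^ length w); split; [now apply Rdiv_lt_0_compat|].
  intros p Hp; apply eval_word_near0_bound.
  apply (Rmult_lt_compat_r (2 ^ length w)) in Hp; [|exact H2].
  unfold Rdiv in Hp; rewrite Rmult_assoc, Rinv_l in Hp; lra.
Qed.

End NearZero.

Hypothesis s_fix : (exists e, 0 < e /\ forall x, Rabs x < e -> s x = x)
                   \/ (forall z : Z, s (IZR z) = IZR z).

Lemma eval_lin_of_eval_word w1 w2 :
  (forall p, eval_word s si w1 p = eval_word s si w2 p) ->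
  forall p, eval_lin w1 p = eval_lin w2 p.
Proof.
  intro E; destruct s_fix as [[e [He s_near0]] | s_Z].
  - destruct (eval_word_near0 e He s_near0 w1) as [d1 [Hd1 E1]].
    destruct (eval_word_near0 e He s_near0 w2) as [d2 [Hd2 E2]].
    set (c := Rmin d1 d2 / 2).
    assert (Hc : 0 < c /\ c < d1 /\ c < d2)
      by (unfold c; pose proof (Rmin_l d1 d2); pose proof (Rmin_r d1 d2);
          pose proof (Rmin_glb_lt d1 d2 0 Hd1 Hd2); lra).
    assert (Hc0 : l1norm (c, 0) = c /\ l1norm (0, c) = c)
      by (unfold l1norm; simpl; rewrite Rabs_R0, Rabs_pos_eq; lra).
    apply (eval_lin_eq_on_axes _ _ c); [lra | ..];
      rewrite <- E1, <- E2 by lra; apply E.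
  - apply (eval_lin_eq_on_axes _ _ 1); [lra | ..].
    + destruct (eval_word_on_Z2 s_Z w1 1 0) as [? [? [E1 L1]]].
      destruct (eval_word_on_Z2 s_Z w2 1 0) as [? [? [E2 L2]]].
      simpl in *; rewrite L1, L2, <- E1, <- E2; apply E.
    + destruct (eval_word_on_Z2 s_Z w1 0 1) as [? [? [E1 L1]]].
      destruct (eval_word_on_Z2 s_Z w2 0 1) as [? [? [E2 L2]]].
      simpl in *; rewrite L1, L2, <- E1, <- E2; apply E.
Qed.

Lemma kernel_in_normal_closure w :
  (forall p, eval_lin w p = p) -> NormalClosure s si (eval_word s si w).
Proof.
  intro Hw; destruct (word_has_nf s si w) as [e [l [Hl [k [Hk E]]]]].
  assert (Hnf : forall p, eval_lin (nf e l) p = p).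
  { intro p; rewrite <- (Hw p) at 2; rewrite (eval_lin_of_eval_word _ _ E p).
    unfold eval_lin; rewrite eval_word_app; fold eval_lin.
    now rewrite (eval_lin_NCword k Hk). }
  destruct (nf_faithful e l Hl Hnf) as [-> ->].
  exists k; split; [exact Hk|].
  apply functional_extensionality; intro p; rewrite E; simpl; now rewrite app_nil_r.
Qed.

Definition proj_SL2 (f : pt -> pt) : pt -> pt :=
  match excluded_middle_informative (Gamma s si f) with
  | left H => eval_lin (proj1_sig (constructive_indefinite_description _ H))
  | right _ => f
  end.

Lemma proj_SL2_eval_word w : proj_SL2 (eval_word s si w) = eval_lin w.
Proof.
  unfold proj_SL2; destruct excluded_middle_informative as [H | H];
    [| exfalso; apply H; now exists w].
  destruct (constructive_indefinite_description _ H) as [w' E]; simpl.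
  apply functional_extensionality; apply eval_lin_of_eval_word.
  intro p; now rewrite E.
Qed.

End Sigma.

Theorem proposition2 (s si : R -> R)
  (s_cont : continuity s) (si_cont : continuity si)
  (s_si : forall y, s (si y) = y) (si_s : forall x, si (s x) = x)
  (s_incr : forall x y, x < y -> s x < s y)
  (s_odd : forall x, s (- x) = - s x)
  (s_fix : (exists e, 0 < e /\ forall x, Rabs x < e -> s x = x)
           \/ (forall z : Z, s (IZR z) = IZR z)) :
  exists pi : (pt -> pt) -> (pt -> pt),
    (forall f g, Gamma s si f -> Gamma s si g ->
       pi (fun p => f (g p)) = (fun p => pi f (pi g p)))
    /\ (forall g, Gamma Rid Rid g -> exists f, Gamma s si f /\ pi f = g)
    /\ (forall w : word, pi (eval_word s si w) = eval_word Rid Rid w)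
    /\ (forall f, Gamma s si f ->
          (pi f = (fun p => p) <-> NormalClosure s si f)).
Proof.
  pose proof (proj_SL2_eval_word s si si_s s_fix) as proj_w.
  exists (proj_SL2 s si); split; [|split; [|split]].
  - intros f g [w1 ->] [w2 ->].
    rewrite eval_word_comp, !proj_w; unfold eval_lin.
    now rewrite eval_word_comp.
  - intros g [w ->]; exists (eval_word s si w); split; [now exists w | apply proj_w].
  - exact proj_w.
  - intros f [w ->]; rewrite proj_w; split.
    + intro Hw; apply kernel_in_normal_closure; [exact si_s | exact s_fix |].
      intro p; exact (equal_f Hw p).
    + intros [k [Hk E]]; rewrite <- (proj_w w), E, proj_w.
      apply functional_extensionality, eval_lin_NCword, Hk.
Qed.
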